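(* Let $\mathcal I$ be an ideal on $\omega$, let $X$ be a topological space with $X=\bigcup\{X_\alpha:\alpha<\kappa\}$ for a cardinal $\kappa$, and let $(f_n)$ be a sequence in $\mathcal C(X)$. (1) If $\kappa<\mathfrak b_s(\mathcal I)$ and $(f_n\restriction X_\alpha)$ is $\mathcal I$-quasi-normally convergent to $0$ for every $\alpha<\kappa$, then $(f_n)$ is $\mathcal I$-quasi-normally convergent to $0$. (2) If $\kappa<\mathfrak b_\sigma(\mathcal I)$ and $(f_n\restriction X_\alpha)$ is $\mathcal I$-$\sigma$-uniformly convergent to $0$ for every $\alpha<\kappa$, then $(f_n)$ is $\mathcal I$-$\sigma$-uniformly convergent to $0$.
   Context: An ideal on $\omega$ is a family $\mathcal I\subseteq\mathcal P(\omega)$ closed under finite unions and subsets, containing all finite sets, with $\omega\notin\mathcal I$. A real sequence $(a_n)$ is $\mathcal I$-convergent to $0$ if $\{n:|a_n|\ge\varepsilon\}\in\mathcal I$ for all $\varepsilon>0$. For a sequence $(f_n)$ of real functions on a set $Y$: $\mathcal I$-uniform convergence to $0$ means $\{n:\exists x\in Y\,(|f_n(x)|\ge\varepsilon)\}\in\mathcal I$ for each $\varepsilon>0$; $\mathcal I$-$\sigma$-uniform means $Y=\bigcup_{k\in\omega}Y_k$ with $(f_n\restriction Y_k)$ $\mathcal I$-uniformly convergent to $0$ for each $k$; $\mathcal I$-quasi-normal means there is a sequence $(\varepsilon_n)$ of positive reals $\mathcal I$-convergent to $0$ with $\{n:|f_n(x)|\ge\varepsilon_n\}\in\mathcal I$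 for each $x\in Y$. $\mathcal C(X)$ = continuous real functions on $X$. Cardinals (convention $\min\emptyset=\infty$, $\kappa<\infty$ for all cardinals): $\widehat{\mathcal P}_{\mathcal I}$ = sequences $(A_n)\in\mathcal I^\omega$ of pairwise disjoint sets; $\mathcal P_{\mathcal I}$ = those with $\bigcup_nA_n=\omega$; $\mathcal M_{\mathcal I}$ = sequences $(E_k)\in\mathcal I^\omega$ with $E_k\subseteq E_{k+1}$. $\mathfrak b_s(\mathcal I)=\min\{|\mathcal E|:\mathcal E\subseteq\widehat{\mathcal P}_{\mathcal I}$ and for every $(A_n)\in\mathcal P_{\mathcal I}$ there is $(E_n)\in\mathcal E$ with $\bigcup_n(A_{n+1}\cap\bigcup_{i\le n}E_i)\notin\mathcal I\}$; $\mathfrak b_\sigma(\mathcal I)=\min\{|\mathcal E|:\mathcal E\subseteq\mathcal M_{\mathcal I}$ and for every $(A_n)\in\mathcal M_{\mathcal I}$ there is $(E_n)\in\mathcal E$ with $E_n\not\subseteq A_n$ for infinitely many $n\}$. *)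

From HB Require Import structures.
From mathcomp Require Import all_boot all_order all_algebra.
From mathcomp Require Import all_classical all_reals all_analysis.
Set Implicit Arguments. Unset Strict Implicit. Unset Printing Implicit Defensive.
Import Order.TTheory GRing.Theory Num.Theory numFieldNormedType.Exports.
Local Open Scope classical_set_scope.
Local Open Scope ring_scope.

Definition is_ideal (I : set (set nat)) : Prop :=
  (forall A B, I A -> I B -> I (A `|` B)) /\
  (forall A B, B `<=` A -> I A -> I B) /\
  (forall A, finite_set A -> I A) /\
  ~ I setT.

Definition Iconv0 {R : realType} (I : set (set nat)) (a : nat -> R) : Prop :=
  forall e : R, 0 < e -> I [set n | e <= `|a n|].

Definition Iuniform {X : Type} {R : realType} (I : set (set nat))
  (f : nat -> X -> R) (Y : set X) : Prop :=
  forall e : R, 0 < e -> I [set n | exists2 x, Y x & e <= `|f n x|].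

Definition Isigma_uniform {X : Type} {R : realType} (I : set (set nat))
  (f : nat -> X -> R) (Y : set X) : Prop :=
  exists Yk : nat -> set X, Y = \bigcup_k Yk k /\ forall k, Iuniform I f (Yk k).

Definition Iquasi_normal {X : Type} {R : realType} (I : set (set nat))
  (f : nat -> X -> R) (Y : set X) : Prop :=
  exists eps : nat -> R, (forall n, 0 < eps n) /\ Iconv0 I eps /\
    forall x, Y x -> I [set n | eps n <= `|f n x|].

Definition Phat (I : set (set nat)) (A : nat -> set nat) : Prop :=
  (forall n, I (A n)) /\ (forall n m, n <> m -> A n `&` A m = set0).
Definition Ppart (I : set (set nat)) (A : nat -> set nat) : Prop :=
  Phat I A /\ \bigcup_n A n = setT.
Definition Mseq (I : set (set nat)) (E : nat -> set nat) : Prop :=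
  (forall k, I (E k)) /\ (forall k, E k `<=` E k.+1).

(* "E is a witness family for b_s(I)", for one member E. *)
Definition bs_fails (I : set (set nat)) (A E : nat -> set nat) : Prop :=
  ~ I (\bigcup_n (A n.+1 `&` \bigcup_(i in [set i | (i <= n)%N]) E i)).

(* |K| < b_s(I): no family E ⊆ Phat_I of cardinality <= |K| is a witness,
   i.e. for every K-indexed family in Phat_I there is (A_n) in P_I defeating it. *)
Definition card_lt_bs (I : set (set nat)) (K : Type) : Prop :=
  forall E : K -> nat -> set nat, (forall a, Phat I (E a)) ->
  exists A, Ppart I A /\ forall a, ~ bs_fails I A (E a).

(* |K| < b_sigma(I). "E_n not subset of A_n for infinitely many n" negated:
   for all but finitely many n, E_n ⊆ A_n. *)
Definition card_lt_bsigma (I : set (set nat)) (K : Type) : Prop :=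
  forall E : K -> nat -> set nat, (forall a, Mseq I (E a)) ->
  exists A, Mseq I A /\ forall a, ~ infinite_set [set n | ~ (E a n `<=` A n)].

From HB Require Import structures.
From mathcomp Require Import all_boot all_order all_algebra.
From mathcomp Require Import all_classical all_reals all_analysis.
Import Order.TTheory GRing.Theory Num.Theory numFieldNormedType.Exports.
Local Open Scope classical_set_scope.
Local Open Scope ring_scope.
Local Notation truncn := Num.truncn.

(* (1) Sort the indices n by the level i at which eps_a(n) lies between
   1/(i+2) and 1/(i+1); the level sets form a disjoint sequence in I.  A
   partition (A_i) defeating all these kappa sequences gives the new control
   sequence 1/(j(n)+1), where n is in A_(j(n)): it I-converges to 0 because
   each A_i is in I, and it dominates eps_a outside a set in I.
   (2) For a sigma-uniform decomposition (Y_(a,k)) of X_a, the sets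
   E_(a,m) of indices n with |f_n| >= 1/(m+1) somewhere on Y_(a,0..m) form
   an increasing sequence in I.  An increasing (A_m) in I eventually covering
   every E_(a,m) gives the pieces Z_j of the points x with |f_n(x)| < 1/(m+1)
   for all m >= j and n outside A_m; each Z_j is I-uniform and they cover X. *)

Lemma finite_nat_ub (S : set nat) : finite_set S ->
  exists N, forall m, S m -> (m < N)%N.
Proof.
move=> /finite_seqP [s ->]; exists (\max_(i <- s) i).+1 => m /= ms.
by rewrite ltnS (@leq_bigmax_seq _ s xpredT id).
Qed.

Section Ideal.

Variable I : set (set nat).
Hypothesis Iid : is_ideal I.

Lemma sub_ideal {A B : set nat} : A `<=` B -> I B -> I A.
Proof. by have [_ [IS _]] := Iid; apply: IS. Qed.

Lemma ideal_setU {A B : set nat} : I A -> I B -> I (A `|` B).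
Proof. by have [IU _] := Iid; apply: IU. Qed.

Lemma ideal_bigcup_le {F : nat -> set nat} (N : nat) : (forall i, I (F i)) ->
  I (\bigcup_(i in [set i | (i <= N)%N]) F i).
Proof.
move=> IF; elim: N => [|N IH].
  by apply: sub_ideal (IF 0%N) => n [i /=]; rewrite leqn0 => /eqP ->.
apply: sub_ideal (ideal_setU IH (IF N.+1)) => n [i /=].
by rewrite leq_eqVlt => /orP[/eqP <-|iN Fin]; [right | left; exists i].
Qed.

Section QuasiNormal.

Variable R : realType.

(* The level is i when 1/(i+2) < eps n <= 1/(i+1); every eps n > 1 has level 0. *)
Definition eps_level (eps : nat -> R) (n : nat) : nat := (truncn (eps n)^-1).-1.

Lemma inv_eps_level_lt (eps : nat -> R) (n : nat) : 0 < eps n ->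
  (eps_level eps n).+2%:R^-1 < eps n.
Proof.
move=> eps0; rewrite invf_plt ?posrE ?ltr0Sn // -truncn_le_nat.
by rewrite /eps_level; case: truncn.
Qed.

Lemma eps_le_inv_level (eps : nat -> R) (n k : nat) : 0 < eps n ->
  (k < eps_level eps n)%N -> eps n <= k.+2%:R^-1.
Proof.
move=> eps0 kn; rewrite invf_pge ?posrE ?ltr0Sn //.
rewrite -truncn_ge_nat ?invr_ge0 ?ltW //.
by move: kn; rewrite /eps_level; case: truncn.
Qed.

Lemma Phat_eps_level {eps : nat -> R} : (forall n, 0 < eps n) -> Iconv0 I eps ->
  Phat I (fun i => [set n | eps_level eps n = i]).
Proof.
move=> eps0 epsI; split=> [i | i i' ii'].
  have epsI_i : I [set n | i.+2%:R^-1 <= `|eps n|] by apply: epsI; rewrite invr_gt0.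
  apply: sub_ideal epsI_i => n /= <-.
  by rewrite gtr0_norm ?ltW ?inv_eps_level_lt.
by apply/seteqP; split=> n //= [ni ni']; apply: ii'; rewrite -ni -ni'.
Qed.

Lemma Iconv0_inv_index (A : nat -> set nat) (j : nat -> nat) :
  (forall i, I (A i)) -> (forall n, A (j n) n) ->
  Iconv0 I (fun n => (j n).+1%:R^-1 : R).
Proof.
move=> AI Aj e e0.
apply: sub_ideal (ideal_bigcup_le (truncn e^-1) AI) => n /=.
rewrite ger0_norm ?invr_ge0 // invf_pge ?posrE ?ltr0Sn // => je.
exists (j n) => //=; rewrite truncn_ge_nat ?invr_ge0 ?ltW //.
by apply: lt_le_trans je; rewrite ltr_nat.
Qed.

Lemma inv_index_lt_sub (eps : nat -> R) (A : nat -> set nat) (j : nat -> nat) :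
  (forall n, 0 < eps n) -> (forall n, A (j n) n) ->
  [set n | (j n).+1%:R^-1 < eps n] `<=` A 0%N `|`
    \bigcup_k (A k.+1 `&` \bigcup_(i in [set i | (i <= k)%N])
                             [set n | eps_level eps n = i]).
Proof.
move=> eps0 Aj n /=; have := Aj n; case: (j n) => [|k] Akn lt_eps; first by left.
right; exists k => //; split=> //.
have [nk|kn] := leqP (eps_level eps n) k; first by exists (eps_level eps n).
by move: lt_eps; rewrite ltNge eps_le_inv_level.
Qed.

Lemma Iquasi_normal_bigcup (X K : Type) (Xa : K -> set X) (f : nat -> X -> R) :
  card_lt_bs I K -> (forall a, Iquasi_normal I f (Xa a)) ->
  Iquasi_normal I f (\bigcup_a Xa a).
Proof.
move=> bsK /choice[eps epsP].
have eps0 a := (epsP a).1.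
have [A [[[AI _] Acov] Adefeats]] :=
  bsK _ (fun a => Phat_eps_level (eps0 a) (epsP a).2.1).
have /choice[j Aj] (n : nat) : exists i, A i n.
  have : (\bigcup_i A i) n by rewrite Acov.
  by case=> i _ Ain; exists i.
exists (fun n => (j n).+1%:R^-1); split; first by move=> n; rewrite invr_gt0.
split; first exact: Iconv0_inv_index.
move=> x [a _ xa].
apply: sub_ideal (ideal_setU ((epsP a).2.2 x xa)
  (ideal_setU (AI 0%N) (contrapT (Adefeats a)))) => n /= fn.
have [le_eps|lt_eps] := leP (eps a n) (j n).+1%:R^-1.
  by left; apply: le_trans fn.
by right; apply: inv_index_lt_sub lt_eps.
Qed.

End QuasiNormal.

Section SigmaUniform.

Variables (R : realType) (X : Type) (f : nat -> X -> R).

Definition sigma_levels (Y : nat -> set X) (m : nat) : set nat :=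
  [set n | exists2 k, (k <= m)%N & exists2 x, Y k x & m.+1%:R^-1 <= `|f n x|].

Lemma Mseq_sigma_levels {Y : nat -> set X} :
  (forall k, Iuniform I f (Y k)) -> Mseq I (sigma_levels Y).
Proof.
move=> YI; split=> [m | m n [k km [x Ykx fx]]].
  have YI_m k : I [set n | exists2 x, Y k x & m.+1%:R^-1 <= `|f n x|].
    by apply: YI; rewrite invr_gt0.
  by apply: sub_ideal (ideal_bigcup_le m YI_m) => n [k km xfx]; exists k.
apply: (ex_intro2 _ _ k (leqW km)); exists x => //; apply: le_trans fx.
by rewrite lef_pV2 ?posrE ?ltr0Sn // ler_nat.
Qed.

Definition small_off (A : nat -> set nat) (j : nat) : set X :=
  [set x | forall m, (j <= m)%N -> forall n, ~ A m n -> `|f n x| < m.+1%:R^-1].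

Lemma Iuniform_small_off {A : nat -> set nat} (j : nat) :
  (forall m, I (A m)) -> Iuniform I f (small_off A j).
Proof.
move=> AI e e0; pose m := maxn j (truncn e^-1).
have me : m.+1%:R^-1 <= e.
  rewrite invf_ple ?posrE ?ltr0Sn // ltW // -truncn_le_nat.
  exact: leq_maxr.
apply: sub_ideal (AI m) => n [x xZ efx]; apply: contrapT => nA.
by have := xZ m (leq_maxl _ _) n nA; rewrite ltNge (le_trans me efx).
Qed.

Lemma bigcup_sub_small_off {Y : nat -> set X} {A : nat -> set nat} :
  finite_set [set m | ~ (sigma_levels Y m `<=` A m)] ->
  \bigcup_k Y k `<=` \bigcup_j small_off A j.
Proof.
move=> /finite_nat_ub[N NY] x [k _ Ykx]; exists (maxn N k) => // m km n nA.
rewrite ltNge; apply/negP => fx; apply: nA.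
have sub_A : sigma_levels Y m `<=` A m.
  apply: contrapT => /NY; rewrite ltnNge.
  by rewrite (leq_trans (leq_maxl _ _) km).
by apply: sub_A; exists k; [apply: leq_trans (leq_maxr _ _) km | exists x].
Qed.

Lemma sub_Iuniform {Y Z : set X} : Y `<=` Z -> Iuniform I f Z -> Iuniform I f Y.
Proof.
move=> YZ ZI e e0; apply: sub_ideal (ZI e e0) => n [x Yx fx].
by exists x; first exact: YZ.
Qed.

Lemma Isigma_uniform_bigcup (K : Type) (Xa : K -> set X) :
  card_lt_bsigma I K -> (forall a, Isigma_uniform I f (Xa a)) ->
  Isigma_uniform I f (\bigcup_a Xa a).
Proof.
move=> bsK /choice[Y YP].
have [A [[AI _] Adefeats]] :=
  bsK _ (fun a => Mseq_sigma_levels (YP a).2).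
exists (fun j => \bigcup_a Xa a `&` small_off A j); split.
  rewrite -setI_bigcupr; apply/esym/setIidl => x [a _ xa].
  apply: (bigcup_sub_small_off (contrapT (Adefeats a))).
  by rewrite -(YP a).1.
by move=> j; apply: sub_Iuniform (Iuniform_small_off j AI); apply: subIsetr.
Qed.

End SigmaUniform.

End Ideal.

Theorem proposition4p5 (R : realType) (X : topologicalType)
  (I : set (set nat)) (K : Type) (Xa : K -> set X) (f : nat -> X -> R) :
  is_ideal I ->
  [set: X] = \bigcup_(a in [set: K]) Xa a ->
  (forall n, continuous (f n)) ->
  (card_lt_bs I K -> (forall a, Iquasi_normal I f (Xa a)) ->
     Iquasi_normal I f [set: X]) /\
  (card_lt_bsigma I K -> (forall a, Isigma_uniform I f (Xa a)) ->
     Isigma_uniform I f [set: X]).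
Proof.
move=> Iid -> _; split.
- exact: Iquasi_normal_bigcup.
- exact: Isigma_uniform_bigcup.
Qed.
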